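(* Consider $N\ge 2$ agents $x_i(k+1)=Ax_i(k)+Bu_i(k)$, $i=1,\dots,N$, with $x_i\in\mathbb{R}^n$, $u_i\in\mathbb{R}^m$, where all eigenvalues of $A$ lie in the closed unit disc and $(A,B)$ is stabilizable. Let $K$ be any matrix such that $A-BK$ is Schur stable. Each agent $i$ uses the protocol $$\eta_i(k+1)=A\eta_i(k)+Bu_i(k)+A\zeta_i(k)-A\hat\zeta_i(k),\qquad u_i(k)=-K\eta_i(k),$$ with $\zeta_i(k)=\sum_{j=1}^N d_{ij}(x_i(k)-x_j(k))$ and $\hat\zeta_i(k)=\sum_{j=1}^N d_{ij}(\eta_i(k)-\eta_j(k))$. Then for every $N$, every weighted directed graph on $N$ nodes containing a directed spanning tree, and all initial conditions $x_i(0),\eta_i(0)$, state synchronization holds: $\lim_{k\to\infty}(x_i(k)-x_j(k))=0$ for all $i,j$. In particular, the scalable state synchronization problem with localized information exchange (full-state coupling) is solvable by a protocol designed using only $(A,B)$.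
   Context: The network is a weighted directed graph with adjacency matrix $[a_{ij}]$, $a_{ij}\ge0$, $a_{ii}=0$ ($a_{ij}>0$ means an edge from $j$ to $i$); weighted in-degree $d_{in}(i)=\sum_j a_{ij}$. The row stochastic matrix $D=[d_{ij}]$ is given by $d_{ij}=a_{ij}/(1+d_{in}(i))$ for $j\ne i$ and $d_{ii}=1-\sum_{j\neq i}d_{ij}=1/(1+d_{in}(i))$, so that $\zeta_i=\frac{1}{1+d_{in}(i)}\sum_j a_{ij}(x_i-x_j)$. A square matrix is Schur stable if all its eigenvalues lie in the open unit disc. A directed spanning tree is a subgraph containing all nodes in which every node except one root has exactly one parent. *)

From HB Require Import structures.
From mathcomp Require Import all_boot all_order all_algebra.
From mathcomp Require Import all_classical all_reals all_analysis.
From mathcomp Require Import complex.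
Set Implicit Arguments. Unset Strict Implicit. Unset Printing Implicit Defensive.
Import Order.TTheory GRing.Theory Num.Theory.
Local Open Scope ring_scope.

Definition cmx (R : rcfType) (n : nat) (A : 'M[R]_n) : 'M[R[i]]_n :=
  map_mx (real_complex R) A.

Definition schur_stable (R : rcfType) (n : nat) (A : 'M[R]_n) : Prop :=
  forall l : R[i], eigenvalue (cmx A) l -> `|l| < 1.

Definition eig_in_closed_disc (R : rcfType) (n : nat) (A : 'M[R]_n) : Prop :=
  forall l : R[i], eigenvalue (cmx A) l -> `|l| <= 1.

Definition stabilizable (R : rcfType) (n m : nat) (A : 'M[R]_n) (B : 'M[R]_(n, m)) : Prop :=
  exists F : 'M[R]_(m, n), schur_stable (A - B *m F).

(* weighted adjacency matrix: a i j >= 0, a i i = 0; a i j > 0 means edge j -> i *)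
Definition weighted_adjacency (R : numDomainType) (N : nat) (a : 'M[R]_N) : Prop :=
  (forall i j, 0 <= a i j) /\ (forall i, a i i = 0).

(* contains a directed spanning tree: a root r and a parent map p such that every
   non-root node i has the edge (p i) -> i (i.e. a i (p i) > 0), and following
   parents from any node leads to the root (so the parent edges form a tree). *)
Definition has_spanning_tree (R : numDomainType) (N : nat) (a : 'M[R]_N) : Prop :=
  exists (r : 'I_N) (p : 'I_N -> 'I_N),
    (forall i, i != r -> 0 < a i (p i)) /\
    (forall i, exists k : nat, iter k p i = r).

Definition din (R : numDomainType) (N : nat) (a : 'M[R]_N) (i : 'I_N) : R :=
  \sum_(j < N) a i j.

Definition dmat (R : numFieldType) (N : nat) (a : 'M[R]_N) : 'M[R]_N :=
  \matrix_(i, j) (if i == j then 1 / (1 + din a i) else a i j / (1 + din a i)).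

From HB Require Import structures.
From mathcomp Require Import all_boot all_order all_algebra.
From mathcomp Require Import all_classical all_reals all_analysis.
From mathcomp Require Import complex.
From mathcomp Require Import ring lra zify.
Set Implicit Arguments. Unset Strict Implicit. Unset Printing Implicit Defensive.
Import Order.TTheory GRing.Theory Num.Theory.
Import numFieldNormedType.Exports.
Local Open Scope classical_set_scope.
Local Open Scope ring_scope.

(* Write e_i = x_i - eta_i for the estimation error of agent i.  The protocol
   makes the errors evolve autonomously, e_i(k+1) = A sum_j d_ij e_j(k), so
   e_i(k) = A^k sum_l (D^k)_il e_l(0), while the disagreement z = x_i - x_j
   obeys z(k+1) = (A - BK) z(k) + BK (e_i(k) - e_j(k)).  The proof has three
   ingredients, developed in this order:
   - growth of matrix powers: via Schur triangularization, A^k grows slower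
     than rho^k for every rho exceeding the moduli of the eigenvalues of A
     (so subexponentially when they lie in the closed unit disc, and
     geometrically decaying when A is Schur stable);
   - consensus for D: D is stochastic with positive diagonal and contains the
     spanning tree, so some power of D has a positive column and the rows of
     D^k merge geometrically; hence e_i - e_j -> 0 geometrically;
   - a Schur stable system driven by a geometrically vanishing input tends
     to 0, which applied to z gives synchronization.
   All estimates use the entrywise l1 norm of matrices. *)

Lemma le_sum_term (C : numDomainType) (I : finType) (F : I -> C) (j : I) :
  (forall i, 0 <= F i) -> F j <= \sum_i F i.
Proof. by move=> F0; rewrite (bigD1 j) //= lerDl sumr_ge0. Qed.

(* The entrywise l1 norm of a matrix; it is submultiplicative, which is all
   we need to turn entrywise power bounds into bounds on trajectories. *)
Definition l1norm (C : numDomainType) m n (X : 'M[C]_(m, n)) : C :=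
  \sum_i \sum_j `|X i j|.

Section L1Norm.
Variable C : numDomainType.

Lemma l1norm_ge0 m n (X : 'M[C]_(m, n)) : 0 <= l1norm X.
Proof. by apply: sumr_ge0 => i _; apply: sumr_ge0. Qed.

Lemma l1norm_entry m n (X : 'M[C]_(m, n)) i j : `|X i j| <= l1norm X.
Proof.
have row_i := @le_sum_term C _ (fun j => `|X i j|) j (fun _ => normr_ge0 _).
apply: le_trans row_i _.
by apply: (@le_sum_term C _ (fun i => \sum_j `|X i j|)) => i'; apply: sumr_ge0.
Qed.

Lemma l1normD m n (X Y : 'M[C]_(m, n)) : l1norm (X + Y) <= l1norm X + l1norm Y.
Proof.
rewrite /l1norm -big_split; apply: ler_sum => i _.
by rewrite -big_split; apply: ler_sum => j _; rewrite mxE ler_normD.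
Qed.

Lemma l1norm0 m n : l1norm (0 : 'M[C]_(m, n)) = 0.
Proof. by rewrite /l1norm big1 // => i _; rewrite big1 // => j _; rewrite mxE normr0. Qed.

Lemma l1norm_sum m n (I : finType) (F : I -> 'M[C]_(m, n)) :
  l1norm (\sum_i F i) <= \sum_i l1norm (F i).
Proof.
elim/big_rec2: _ => [|i y1 y2 _ IH]; first by rewrite l1norm0.
by apply: le_trans (l1normD _ _) _; rewrite lerD2l.
Qed.

Lemma l1normZ m n (c : C) (X : 'M[C]_(m, n)) : l1norm (c *: X) = `|c| * l1norm X.
Proof.
rewrite /l1norm mulr_sumr; apply: eq_bigr => i _; rewrite mulr_sumr.
by apply: eq_bigr => j _; rewrite mxE normrM.
Qed.

Lemma l1normM m n p (X : 'M[C]_(m, n)) (Y : 'M[C]_(n, p)) :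
  l1norm (X *m Y) <= l1norm X * l1norm Y.
Proof.
rewrite /l1norm mulr_suml; apply: ler_sum => i _.
apply: (le_trans (y := \sum_j \sum_l `|X i l| * `|Y l j|)).
  apply: ler_sum => j _; rewrite mxE; apply: le_trans (ler_norm_sum _ _ _) _.
  by apply: ler_sum => l _; rewrite normrM.
rewrite exchange_big /= mulr_suml; apply: ler_sum => l _.
rewrite -mulr_sumr ler_wpM2l //.
by apply: (@le_sum_term C _ (fun l => \sum_j `|Y l j|)) => l'; apply: sumr_ge0.
Qed.

Lemma l1norm_le_entries m n (X : 'M[C]_(m, n)) (b : C) :
  (forall i j, `|X i j| <= b) -> l1norm X <= (m * n)%:R * b.
Proof.
move=> Xb; apply: (le_trans (y := \sum_(i < m) \sum_(j < n) b)).
  by apply: ler_sum => i _; apply: ler_sum.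
by rewrite !sumr_const !card_ord -mulrnA mulr_natl mulnC.
Qed.

End L1Norm.

(* Over the reals the l1 norm dominates the (sup) norm of vectors, so a
   geometrically decaying l1 bound yields convergence to 0. *)
Lemma l1norm_geometric_cvg (R : realType) n (z : nat -> 'cV[R]_n) (c q : R) :
  0 <= q -> q < 1 -> (forall k, l1norm (z k) <= c * q ^+ k) ->
  z @ \oo --> (0 : 'cV[R]_n).
Proof.
move=> q0 q1 zq; apply/cvgr0Pnorm_le => eps eps0.
have geo0 : geometric c q @ \oo --> (0 : R) by apply: cvg_geometric; rewrite ger0_norm.
have geo_near := @cvgr0_norm_le _ _ _ _ _ (geometric c q) geo0 eps eps0.
near=> k.
have geo_eps : `|geometric c q k| <= eps by near: k; exact: geo_near.
have norm_l1 : `|z k| <= l1norm (z k).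
  rewrite /Num.norm /= mx_normrE; apply: bigmax_le; first exact: l1norm_ge0.
  by move=> ij _; apply: l1norm_entry.
by apply: le_trans norm_l1 (le_trans (zq k) (le_trans (ler_norm _) geo_eps)).
Unshelve. all: by end_near.
Qed.

Section TriangularPowers.
Variable C : numFieldType.

Lemma rowsum_pow n (X : 'M[C]_n) (g : C) : 0 <= g ->
  (forall i, \sum_j `|X i j| <= g) -> forall k i, \sum_j `|(X ^+ k) i j| <= g ^+ k.
Proof.
move=> g0 Xg; elim=> [|k IH] i.
  rewrite expr0 (bigD1 i) //= big1 => [|j /negPf ji]; last by rewrite mxE eq_sym ji normr0.
  by rewrite mxE eqxx normr1 addr0.
rewrite exprS -mulmxE.
apply: (le_trans (y := \sum_j \sum_l `|X i l| * `|(X ^+ k) l j|)).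
  apply: ler_sum => j _; rewrite mxE; apply: le_trans (ler_norm_sum _ _ _) _.
  by apply: ler_sum => l _; rewrite normrM.
rewrite exchange_big /= exprS.
apply: (le_trans (y := \sum_l `|X i l| * g ^+ k)).
  by apply: ler_sum => l _; rewrite -mulr_sumr ler_wpM2l.
by rewrite -mulr_suml ler_wpM2r // exprn_ge0.
Qed.

(* Conjugation by diag(e^0, ..., e^(n-1)); for a lower triangular T and a
   small e > 0 it shrinks the off-diagonal part while keeping the diagonal. *)
Definition diag_scale n (e : C) (T : 'M[C]_n) : 'M[C]_n :=
  \matrix_(i, j) (e ^+ i / e ^+ j * T i j).

Lemma diag_scaleX n (e : C) (T : 'M[C]_n) k : e != 0 ->
  (diag_scale e T) ^+ k = diag_scale e (T ^+ k).
Proof.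
move=> e0; have eX i : e ^+ i != 0 by rewrite expf_neq0.
elim: k => [|k IH]; apply/matrixP => i j.
  rewrite !expr0 !mxE; case: (i =P j) => [->|_]; by rewrite ?divff ?mul1r ?mulr0.
rewrite !exprS -!mulmxE IH !mxE mulr_sumr; apply: eq_bigr => l _.
by rewrite !mxE; field; rewrite !eX.
Qed.

Lemma trig_scale_rowsum n (T : 'M[C]_n) (mu d e : C) : is_trig_mx T ->
  (forall i, `|T i i| <= mu) -> 0 < e -> e <= 1 -> e * l1norm T <= d ->
  forall i, \sum_j `|diag_scale e T i j| <= mu + d.
Proof.
move=> /is_trig_mxP Ttrig Tmu e0 e1 eT i.
rewrite (bigD1 i) //= mxE divff ?expf_neq0 ?gt_eqF // mul1r lerD //.
apply: le_trans eT; apply: (le_trans (y := \sum_j e * `|T i j|)).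
  rewrite [X in _ <= X](bigD1 i) //= -[X in X <= _]add0r lerD //; first by rewrite mulr_ge0 // ltW.
  apply: ler_sum => j ji; rewrite mxE normrM.
  case: (ltngtP i j) => [ij|ji'|/val_inj ij]; last by rewrite ij eqxx in ji.
    by rewrite Ttrig // normr0 !mulr0.
  rewrite ler_wpM2r // -expfB // ger0_norm ?exprn_ge0 ?(ltW e0) //.
  by rewrite -[X in _ <= X]expr1 ler_wiXn2l ?(ltW e0) // subn_gt0.
rewrite -mulr_sumr ler_wpM2l ?(ltW e0) //.
by rewrite /l1norm; apply: (@le_sum_term C _ (fun i => \sum_j `|T i j|)) => i'; apply: sumr_ge0.
Qed.

Lemma trig_pow_bound n (T : 'M[C]_n) (mu rho : C) : is_trig_mx T -> 0 <= mu ->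
  (forall i, `|T i i| <= mu) -> mu < rho ->
  exists c : C, 0 <= c /\ forall k, l1norm (T ^+ k) <= c * rho ^+ k.
Proof.
move=> Ttrig mu0 Tmu murho.
set d := rho - mu; have d0 : 0 < d by rewrite subr_gt0.
have rho0 : 0 <= rho by rewrite ltW // (le_lt_trans mu0).
have dT0 : 0 < d + l1norm T by rewrite ltr_wpDr // l1norm_ge0.
set e := d / (d + l1norm T).
have e0 : 0 < e by rewrite divr_gt0.
have e1 : e <= 1 by rewrite ler_pdivrMr // mul1r lerDl l1norm_ge0.
have eT : e * l1norm T <= d.
  by rewrite mulrAC ler_pdivrMr // ler_wpM2l ?(ltW d0) // lerDr ltW.
have rows_rho : forall i, \sum_j `|diag_scale e T i j| <= rho.
  by move=> i; rewrite -(subrKC mu rho); exact: trig_scale_rowsum.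
have rows := rowsum_pow rho0 rows_rho.
have eXn i : 0 < e ^+ i by rewrite exprn_gt0.
exists ((n * n)%:R * (e ^+ n)^-1); split; first by rewrite mulr_ge0 // invr_ge0 ltW.
move=> k; rewrite -mulrA; apply: l1norm_le_entries => i j.
have -> : (T ^+ k) i j = e ^+ j / e ^+ i * (diag_scale e T ^+ k) i j.
  by rewrite diag_scaleX ?gt_eqF // mxE; field; rewrite !gt_eqF.
have e0' : 0 <= e := ltW e0.
have scale_le : e ^+ j / e ^+ i <= e ^- n.
  rewrite -[e ^- n]mul1r ler_pM ?exprn_ge0 ?invr_ge0 ?exprn_ge0 ?exprn_ile1 //.
  by rewrite lef_pV2 ?posrE // ler_wiXn2l // ltnW.
rewrite normrM ger0_norm ?divr_ge0 ?exprn_ge0 //.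
apply: ler_pM => //; first by rewrite divr_ge0 ?exprn_ge0.
apply: le_trans (rows k i).
exact: (@le_sum_term C _ (fun j => `|(diag_scale e T ^+ k) i j|)).
Qed.

End TriangularPowers.

Lemma trig_similar (C : numClosedFieldType) n (A : 'M[C]_n.+1) :
  exists P T : 'M[C]_n.+1, [/\ is_trig_mx T,
    forall k, A ^+ k = invmx P *m T ^+ k *m P & forall i, eigenvalue A (T i i)].
Proof.
have [P Pu Ttrig] := Schur A (ltn0Sn n).
set T := conjmx P A in Ttrig.
have Punit := unitarymx_unit Pu.
have AE : A = invmx P *m T *m P.
  by rewrite /T conjumx // !mulmxA mulVmx // mul1mx mulmxKV.
exists P, T; split => // [k|i].
  elim: k => [|k IH]; first by rewrite !expr0 mulmx1 mulVmx.
  by rewrite !exprS -!mulmxE IH {1}AE -!mulmxA mulKVmx.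
have Teig : eigenvalue T (T i i).
  rewrite eigenvalue_root_char char_poly_trig // /root horner_prod (bigD1 i) //=.
  by rewrite hornerXsubC subrr mul0r.
apply: (eigenvalue_conjmx _ _ Teig); first by apply: stablemx_full; rewrite row_full_unit.
by rewrite row_free_unit.
Qed.

Local Open Scope complex_scope.

Lemma l1norm_complex (R : rcfType) m n (X : 'M[R]_(m, n)) :
  l1norm (map_mx (real_complex R) X) = (l1norm X)%:C.
Proof.
rewrite /l1norm rmorph_sum; apply: eq_bigr => i _; rewrite rmorph_sum.
by apply: eq_bigr => j _; rewrite mxE normc_def /= expr0n addr0 sqrtr_sqr.
Qed.

Lemma spectral_growth (R : realType) n (M : 'M[R]_n) : exists mu : R,
  (forall b : R, 0 < b -> (forall l, eigenvalue (cmx M) l -> `|l| < b%:C) -> mu < b) /\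
  (forall rho, mu < rho ->
     exists c, 0 <= c /\ forall k, l1norm (M ^+ k) <= c * rho ^+ k).
Proof.
case: n M => [|n] M.
  exists 0; split => // rho _; exists 0; split => // k.
  by rewrite /l1norm big_ord0 mul0r.
have [P [T [Ttrig MkE Teig]]] := trig_similar (cmx M).
have normRe (z : R[i]) : `|z| = (complex.Re `|z|)%:C by rewrite normc_def.
pose mu := \big[Order.max/0]_i complex.Re `|T i i|.
have Tmu i : `|T i i| <= mu%:C by rewrite normRe lecR /mu; apply: le_bigmax.
have mu0 : 0 <= mu.
  by apply: le_trans (le_bigmax _ _ ord0); rewrite -ler0c -normRe.
exists mu; split=> [b b0 eig_b | rho murho].
  by apply: bigmax_lt => // i _; rewrite -ltcR -normRe; apply: eig_b.
have [c [c0 Tk]] : exists c, 0 <= c /\ forall k, l1norm (T ^+ k) <= c * rho%:C ^+ k.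
  by apply: trig_pow_bound Ttrig _ Tmu _; rewrite ?ler0c ?ltcR.
pose cC := l1norm (invmx P) * c * l1norm P.
have cC0 : 0 <= cC by rewrite !mulr_ge0 // l1norm_ge0.
have cCE : cC = (complex.Re cC)%:C.
  by move: cC0; case: cC => a b cC0; have /= -> := ger0_Im cC0.
exists (complex.Re cC); split=> [|k]; first by rewrite -ler0c -cCE.
rewrite -lecR rmorphM /= rmorphXn -cCE -l1norm_complex.
have -> : map_mx (real_complex R) (M ^+ k) = invmx P *m T ^+ k *m P.
  by rewrite -MkE; elim: k => [|k IH]; rewrite ?map_mx1 // !exprS -!mulmxE map_mxM IH.
apply: le_trans (l1normM _ _) _; rewrite /cC mulrAC ler_wpM2r ?l1norm_ge0 //.
apply: le_trans (l1normM _ _) _; rewrite -mulrA ler_wpM2l ?l1norm_ge0 //; exact: Tk.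
Qed.

Local Close Scope complex_scope.

Lemma closed_disc_growth (R : realType) n (A : 'M[R]_n) (rho : R) :
  eig_in_closed_disc A -> 1 < rho ->
  exists c, 0 <= c /\ forall k, l1norm (A ^+ k) <= c * rho ^+ k.
Proof.
move=> Adisc rho1; have [mu [mu_lt growth]] := spectral_growth A.
apply: growth; apply: mu_lt => [|l /Adisc l1]; first exact: lt_trans rho1.
by apply: le_lt_trans l1 _; rewrite -(rmorph1 (real_complex R)) ltcR.
Qed.

Lemma schur_stable_decay (R : realType) n (M : 'M[R]_n) (th : R) :
  schur_stable M -> th < 1 -> exists q c, [/\ th < q, q < 1, 0 <= c &
    forall k, l1norm (M ^+ k) <= c * q ^+ k].
Proof.
move=> Mstab th1; have [mu [mu_lt growth]] := spectral_growth M.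
have mu1 : mu < 1 by apply: mu_lt => //; exact: Mstab.
have [m1 m2] : mu <= Num.max mu th /\ th <= Num.max mu th by rewrite !le_max !lexx orbT.
have mx1 : Num.max mu th < 1 by rewrite gt_max mu1 th1.
have [c [c0 Mk]] := growth ((1 + Num.max mu th) / 2) ltac:(lra).
by exists ((1 + Num.max mu th) / 2), c; split => //; lra.
Qed.

Definition stochastic (R : numDomainType) N (P : 'M[R]_N) : Prop :=
  (forall i j, 0 <= P i j) /\ (forall i, \sum_j P i j = 1).

Section Stochastic.
Variables (R : realFieldType) (N : nat).
Implicit Types (P Q D : 'M[R]_N).

Lemma stochasticM P Q : stochastic P -> stochastic Q -> stochastic (P * Q).
Proof.
move=> [P0 P1] [Q0 Q1]; split=> [i j|i]; rewrite -mulmxE.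
  by rewrite mxE; apply: sumr_ge0 => l _; apply: mulr_ge0.
under eq_bigr do rewrite mxE.
by rewrite exchange_big /=; under eq_bigr do rewrite -mulr_sumr Q1 mulr1.
Qed.

Lemma stochasticX P k : stochastic P -> stochastic (P ^+ k).
Proof.
move=> sP; elim: k => [|k IH]; last by rewrite exprS; apply: stochasticM.
rewrite expr0; split=> [i j|i]; first by rewrite mxE; case: (i == j).
rewrite (bigD1 i) //= big1 => [|j /negPf ji]; last by rewrite mxE eq_sym ji.
by rewrite mxE eqxx addr0.
Qed.

Lemma stochastic_le1 P : stochastic P -> forall i j, P i j <= 1.
Proof. by move=> [P0 P1] i j; rewrite -(P1 i); apply: (@le_sum_term R _ (P i)). Qed.

Lemma mulmx_entry_ge P Q i j l : (forall i j, 0 <= P i j) -> (forall i j, 0 <= Q i j) ->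
  P i l * Q l j <= (P * Q) i j.
Proof.
move=> P0 Q0; rewrite -mulmxE mxE.
by apply: (@le_sum_term R _ (fun l => P i l * Q l j)) => l'; apply: mulr_ge0.
Qed.

Lemma tree_path_pos D r (p : 'I_N -> 'I_N) :
  stochastic D -> (forall i, 0 < D i i) -> (forall i, i != r -> 0 < D i (p i)) ->
  forall m i, iter m p i = r -> forall t, (m <= t)%N -> 0 < (D ^+ t) i r.
Proof.
move=> sD Dd Dp.
have root_pos t : 0 < (D ^+ t) r r.
  elim: t => [|t IH]; first by rewrite expr0 mxE eqxx ltr01.
  rewrite exprS; apply: lt_le_trans (mulmx_entry_ge r r r sD.1 (stochasticX t sD).1).
  exact: mulr_gt0.
elim=> [|m IH] i; first by move=> /= -> t _.
rewrite iterSr => reach t; case: (i =P r) => [-> _|/eqP ir]; first exact: root_pos.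
case: t => [//|t] mt; rewrite exprS.
apply: lt_le_trans (mulmx_entry_ge i r (p i) sD.1 (stochasticX t sD).1).
by rewrite mulr_gt0 ?Dp ?IH.
Qed.

Lemma positive_column D r (p : 'I_N -> 'I_N) :
  stochastic D -> (forall i, 0 < D i i) -> (forall i, i != r -> 0 < D i (p i)) ->
  (forall i, exists k, iter k p i = r) ->
  exists T0 c, [/\ (0 < T0)%N, 0 < c, c <= 1 & forall i, c <= (D ^+ T0) i r].
Proof.
move=> sD Dd Dp reach; have [f hf] := choice reach.
pose T0 := (\max_i f i).+1.
exists T0, (\big[Order.min/1]_i (D ^+ T0) i r); split => //.
- apply: lt_bigmin => // i _; apply: (tree_path_pos sD Dd Dp (hf i)).
  by apply: leqW; apply: leq_bigmax.
- exact: bigmin_le_id.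
- by move=> i; apply: bigmin_le.
Qed.

Lemma average_contract P r (c : R) (w : 'I_N -> R) lo hi :
  stochastic P -> (forall i, c <= P i r) -> 0 <= c ->
  (forall l, lo <= w l <= hi) ->
  forall i, lo + c * (w r - lo) <= \sum_l P i l * w l <= hi - c * (hi - w r).
Proof.
move=> [P0 P1] Pc c0 hw i.
have shift x : \sum_l P i l * w l - x = \sum_l P i l * (w l - x).
  by under [RHS]eq_bigr do rewrite mulrBr; rewrite sumrB -mulr_suml P1 mul1r.
have [lor rhi] := andP (hw r).
have H1 : c * (w r - lo) <= P i r * (w r - lo) by rewrite ler_wpM2r ?subr_ge0.
have H2 : P i r * (w r - lo) <= \sum_l P i l * (w l - lo).
  apply: (@le_sum_term R _ (fun l => P i l * (w l - lo))) => l.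
  by rewrite mulr_ge0 // subr_ge0; case/andP: (hw l).
have H3 : \sum_l P i l * (w l - hi) <= P i r * (w r - hi).
  rewrite (bigD1 r) //= -[X in _ <= X]addr0 lerD //.
  rewrite -oppr_ge0 -sumrN; apply: sumr_ge0 => l _.
  by rewrite -mulrN mulr_ge0 // oppr_ge0 subr_le0; case/andP: (hw l).
have H4 : P i r * (w r - hi) <= c * (w r - hi) by rewrite ler_wnM2r ?subr_le0.
move: H1 H2 H3 H4; rewrite -!shift => *; apply/andP; split; lra.
Qed.

Lemma column_oscillation D r T0 (c : R) : stochastic D -> (0 < T0)%N ->
  0 <= c -> c <= 1 -> (forall i, c <= (D ^+ T0) i r) ->
  forall l k, exists lo hi, hi - lo <= (1 - c) ^+ (k %/ T0) /\
    forall i, lo <= (D ^+ k) i l <= hi.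
Proof.
move=> sD T0p c0 c1 Dc l; elim/ltn_ind => k IH.
case: (ltnP k T0) => kT.
  exists 0, 1; rewrite divn_small // expr0 subr0; split => // i.
  by rewrite (stochasticX k sD).1 stochastic_le1 //; exact: stochasticX.
have [lo [hi [lohi Hw]]] := IH (k - T0)%N ltac:(lia).
pose w j := (D ^+ (k - T0)) j l.
exists (lo + c * (w r - lo)), (hi - c * (hi - w r)); split.
  have -> : (k %/ T0 = (k - T0) %/ T0 + 1)%N.
    by rewrite -{1}(subnK kT) divnDr ?dvdnn // divnn T0p.
  rewrite addn1 exprS.
  have -> : hi - c * (hi - w r) - (lo + c * (w r - lo)) = (1 - c) * (hi - lo) by ring.
  by rewrite ler_wpM2l // subr_ge0.
move=> i; have -> : (D ^+ k) i l = \sum_j (D ^+ T0) i j * w j.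
  by rewrite -{1}(subnKC kT) exprD -mulmxE mxE.
by apply: average_contract => //; exact: stochasticX.
Qed.

Lemma bernoulli_ineq (x : R) n : 0 <= x -> x <= 1 -> 1 - n%:R * x <= (1 - x) ^+ n.
Proof.
move=> x0 x1; elim: n => [|n IH]; first by rewrite expr0 mul0r subr0.
have := ler_wpM2l (_ : 0 <= 1 - x) IH; rewrite exprS -natr1.
have : 0 <= n%:R :> R by []; nra.
Qed.

Lemma stochastic_consensus D r (p : 'I_N -> 'I_N) :
  stochastic D -> (forall i, 0 < D i i) -> (forall i, i != r -> 0 < D i (p i)) ->
  (forall i, exists k, iter k p i = r) ->
  exists th c : R, [/\ 0 <= th, th < 1 &
    forall k i j l, `|(D ^+ k) i l - (D ^+ k) j l| <= c * th ^+ k].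
Proof.
move=> sD Dd Dp reach.
have [T0 [c [T0p c0 c1 Dc]]] := positive_column sD Dd Dp reach.
pose th := 1 - c / T0.+1%:R.
have cT0 : 0 < c / T0.+1%:R by rewrite divr_gt0.
have cT1 : c / T0.+1%:R < 1 by rewrite ltr_pdivrMr // mul1r (le_lt_trans c1) // ltr1n.
have th0 : 0 < th by rewrite subr_gt0.
have thT0 : 1 - c <= th ^+ T0.
  apply: le_trans (bernoulli_ineq T0 (ltW cT0) (ltW cT1)).
  rewrite lerB // mulrA ler_pdivrMr // mulrC ler_wpM2l ?(ltW c0) //.
  by rewrite ler_nat.
exists th, (th ^- T0); split => //; first by rewrite ltW.
  by rewrite /th ltrBlDr ltrDl.
move=> k i j l; have [lo [hi [lohi Hw]]] := column_oscillation sD T0p (ltW c0) c1 Dc l k.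
have rate : (1 - c) ^+ (k %/ T0) <= th ^- T0 * th ^+ k.
  apply: (le_trans (y := th ^+ (T0 * (k %/ T0)))).
    by rewrite exprM; apply: lerXn2r; rewrite ?nnegrE ?subr_ge0 ?exprn_ge0 ?(ltW th0).
  rewrite mulrC ler_pdivlMr ?exprn_gt0 // -exprD ler_wiXn2l ?(ltW th0) //.
    by rewrite /th lerBlDr lerDl ltW.
  by rewrite addnC -mulnS mulnC ltnW // ltn_ceil.
apply: le_trans rate; apply: le_trans lohi.
have /andP[a1 a2] := Hw i; have /andP[b1 b2] := Hw j.
by rewrite ler_norml; apply/andP; split; lra.
Qed.

End Stochastic.

Lemma geometric_convolution (R : realFieldType) (q th : R) k : 0 <= th -> th < q ->
  \sum_(t < k) q ^+ (k.-1 - t) * th ^+ t <= q ^+ k / (q - th).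
Proof.
move=> th0 thq; have qth : 0 < q - th by rewrite subr_gt0.
by rewrite ler_pdivlMr // mulrC -subrXX lerBlDr lerDl exprn_ge0.
Qed.

Section ForcedStableSystem.
Variables (R : realType) (n : nat) (M : 'M[R]_n) (z w : nat -> 'cV[R]_n).
Hypothesis z_step : forall k, z k.+1 = M *m z k + w k.

Lemma variation_of_constants k :
  z k = M ^+ k *m z 0 + \sum_(t < k) M ^+ (k.-1 - t) *m w t.
Proof.
elim: k => [|k IH]; first by rewrite expr0 mul1mx big_ord0 addr0.
rewrite z_step IH mulmxDr mulmxA big_ord_recr /= subnn expr0 mul1mx addrA.
congr (_ + _ + _); first by rewrite exprS -mulmxE.
rewrite mulmx_sumr; apply: eq_bigr => t _; rewrite mulmxA.
have -> : (k - t = (k.-1 - t).+1)%N by have := ltn_ord t; lia.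
by rewrite exprS -mulmxE.
Qed.

Lemma forced_response_bound (c q W th : R) : 0 <= c -> 0 <= th -> th < q -> 0 <= W ->
  (forall k, l1norm (M ^+ k) <= c * q ^+ k) -> (forall t, l1norm (w t) <= W * th ^+ t) ->
  forall k, l1norm (z k) <= c * (l1norm (z 0) + W / (q - th)) * q ^+ k.
Proof.
move=> c0 th0 thq W0 Mk wt k; have qth : 0 < q - th by rewrite subr_gt0.
rewrite variation_of_constants; apply: le_trans (l1normD _ _) _.
have free : l1norm (M ^+ k *m z 0) <= c * q ^+ k * l1norm (z 0).
  by apply: le_trans (l1normM _ _) _; rewrite ler_wpM2r ?l1norm_ge0.
have forced : l1norm (\sum_(t < k) M ^+ (k.-1 - t) *m w t) <=
    c * W * \sum_(t < k) q ^+ (k.-1 - t) * th ^+ t.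
  apply: le_trans (l1norm_sum _) _; rewrite mulr_sumr; apply: ler_sum => t _.
  apply: le_trans (l1normM _ _) _.
  rewrite [X in _ <= X](_ : _ = (c * q ^+ (k.-1 - t)) * (W * th ^+ t)); last by ring.
  by rewrite ler_pM ?l1norm_ge0.
have conv := ler_wpM2l (mulr_ge0 c0 W0) (geometric_convolution k th0 thq).
rewrite [X in _ <= X](_ : _ = c * q ^+ k * l1norm (z 0) + c * W * (q ^+ k / (q - th))).
  by rewrite lerD // (le_trans forced).
by field; rewrite gt_eqF.
Qed.

Lemma stable_forced_cvg (W th : R) : schur_stable M -> 0 <= th -> th < 1 ->
  (forall k, l1norm (w k) <= W * th ^+ k) -> z @ \oo --> (0 : 'cV[R]_n).
Proof.
move=> Mstab th0 th1 wk.
have W0 : 0 <= W by have := wk 0%N; rewrite expr0 mulr1; apply: le_trans; exact: l1norm_ge0.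
have [q [c [thq q1 c0 Mk]]] := schur_stable_decay Mstab th1.
apply: (l1norm_geometric_cvg (q := q)) (forced_response_bound c0 th0 thq W0 Mk wk).
  exact: le_trans (ltW thq).
exact: q1.
Qed.

End ForcedStableSystem.

Section CouplingMatrix.
Variables (R : realFieldType) (N : nat) (a : 'M[R]_N).
Hypothesis wa : weighted_adjacency a.

Lemma din_pos i : 0 < 1 + din a i.
Proof. by rewrite ltr_pwDl // sumr_ge0 // => j _; exact: wa.1. Qed.

Lemma dmat_stochastic : stochastic (dmat a).
Proof.
split=> [i j|i].
  by rewrite mxE; case: (i == j); apply: divr_ge0; rewrite ?(wa.1 i j) ?(ltW (din_pos i)).
have -> : \sum_j dmat a i j = (\sum_j (if i == j then 1 else a i j)) / (1 + din a i).
  by rewrite mulr_suml; apply: eq_bigr => j _; rewrite mxE; case: (i == j).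
rewrite (bigD1 i) //= eqxx.
have -> : \sum_(j | j != i) (if i == j then 1 else a i j) = din a i.
  rewrite /din [RHS](bigD1 i) //= wa.2 add0r.
  by apply: eq_bigr => j ji; rewrite eq_sym (negPf ji).
by rewrite divff // gt_eqF // din_pos.
Qed.

Lemma dmat_diag_pos i : 0 < dmat a i i.
Proof. by rewrite mxE eqxx divr_gt0 ?din_pos. Qed.

Lemma dmat_edge_pos i j : 0 < a i j -> 0 < dmat a i j.
Proof.
move=> aij; have ij : i != j by apply: contraTneq aij => ->; rewrite wa.2 ltxx.
by rewrite mxE (negPf ij) divr_gt0 ?din_pos.
Qed.
End CouplingMatrix.


Section Protocol.
Variables (R : realType) (n m N : nat) (A : 'M[R]_n) (B : 'M[R]_(n, m)).
Variables (K : 'M[R]_(m, n)) (D : 'M[R]_N).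
Variables (x eta : 'I_N -> nat -> 'cV[R]_n) (u : 'I_N -> nat -> 'cV[R]_m).
Hypothesis u_def : forall i k, u i k = - (K *m eta i k).
Hypothesis x_step : forall i k, x i k.+1 = A *m x i k + B *m u i k.
Hypothesis eta_step : forall i k, eta i k.+1 =
  A *m eta i k + B *m u i k
  + A *m (\sum_(j < N) D i j *: (x i k - x j k))
  - A *m (\sum_(j < N) D i j *: (eta i k - eta j k)).

Lemma estimation_error_step : (forall i, \sum_j D i j = 1) ->
  forall i k, x i k.+1 - eta i k.+1 = A *m \sum_j D i j *: (x j k - eta j k).
Proof.
move=> D1 i k; rewrite x_step eta_step.
set Sx := \sum_(j < N) D i j *: (x i k - x j k).
set Se := \sum_(j < N) D i j *: (eta i k - eta j k).
have avg : \sum_j D i j *: (x j k - eta j k) = (x i k - eta i k) - (Sx - Se).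
  rewrite -[x i k - eta i k]scale1r -(D1 i) scaler_suml /Sx /Se -!sumrB.
  apply: eq_bigr => j _; rewrite -!scalerBr; congr (_ *: _).
  by apply/matrixP => r s; rewrite !mxE; ring.
rewrite avg !mulmxBr; apply/matrixP => r s; rewrite !mxE; ring.
Qed.

Lemma disagreement_step i j k : x i k.+1 - x j k.+1 =
  (A - B *m K) *m (x i k - x j k) + (B *m K) *m ((x i k - eta i k) - (x j k - eta j k)).
Proof.
rewrite !x_step !u_def !mulmxN !mulmxA mulmxBl !mulmxBr.
by apply/matrixP => r s; rewrite !mxE; ring.
Qed.

End Protocol.

Section ErrorDecay.
Variables (R : realType) (n N : nat) (A : 'M[R]_n) (D : 'M[R]_N).
Variable e : 'I_N -> nat -> 'cV[R]_n.
Hypothesis e_step : forall i k, e i k.+1 = A *m \sum_j D i j *: e j k.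

Lemma error_closed_form k i : e i k = A ^+ k *m \sum_l (D ^+ k) i l *: e l 0.
Proof.
elim: k i => [|k IH] i.
  rewrite expr0 mul1mx (bigD1 i) //= mxE eqxx scale1r big1 ?addr0 // => l li.
  by rewrite mxE eq_sym (negPf li) scale0r.
rewrite e_step; under eq_bigr do rewrite IH scalemxAr.
rewrite -mulmx_sumr mulmxA exprS -mulmxE; congr (_ *m _).
under [RHS]eq_bigr do rewrite exprS -mulmxE mxE scaler_suml.
rewrite [RHS]exchange_big /=; apply: eq_bigr => j _.
by rewrite scaler_sumr; apply: eq_bigr => l _; rewrite scalerA.
Qed.

(* If A has no eigenvalue outside the closed unit disc and the rows of D ^+ k
   merge at a geometric rate th < 1, then the errors of any two agents
   merge geometrically as well: the growth of A ^+ k is slower than any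
   exponential rho > 1, which we pick with rho * th < 1. *)
Lemma error_disagreement_decay (th c : R) :
  eig_in_closed_disc A -> 0 <= th -> th < 1 ->
  (forall k i j l, `|(D ^+ k) i l - (D ^+ k) j l| <= c * th ^+ k) ->
  exists W th', [/\ 0 <= th', th' < 1 &
    forall i j k, l1norm (e i k - e j k) <= W * th' ^+ k].
Proof.
move=> Adisc th0 th1 Dk.
pose rho := 2 / (1 + th).
have rho1 : 1 < rho by rewrite /rho ltr_pdivlMr ?mul1r; lra.
have rho_th1 : rho * th < 1 by rewrite /rho mulrAC ltr_pdivrMr ?mul1r; lra.
have [cA [cA0 Ak]] := closed_disc_growth Adisc rho1.
pose E0 := \sum_l l1norm (e l 0).
exists (cA * (c * E0)), (rho * th); split => //; first by rewrite mulr_ge0 // divr_ge0 //; lra.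
move=> i j k; rewrite !error_closed_form -mulmxBr -sumrB.
under eq_bigr do rewrite -scalerBl.
apply: le_trans (l1normM _ _) _; rewrite exprMn mulrACA.
apply: ler_pM; rewrite ?l1norm_ge0 //.
apply: le_trans (l1norm_sum _) _; rewrite mulrAC /E0 mulr_sumr ler_sum // => l _.
by rewrite l1normZ ler_wpM2r ?l1norm_ge0.
Qed.

End ErrorDecay.

(* Main theorem.  The stabilizability hypothesis only guarantees that a gain K
   exists; the proof uses the Schur stability of A - B K directly. *)
Theorem theorem1 (R : realType) (n m : nat) (A : 'M[R]_n) (B : 'M[R]_(n, m))
  (K : 'M[R]_(m, n)) :
  eig_in_closed_disc A -> stabilizable A B -> schur_stable (A - B *m K) ->
  forall (N : nat), (2 <= N)%N ->
  forall (a : 'M[R]_N), weighted_adjacency a -> has_spanning_tree a ->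
  forall (x eta : 'I_N -> nat -> 'cV[R]_n) (u : 'I_N -> nat -> 'cV[R]_m),
  (forall i k, u i k = - (K *m eta i k)) ->
  (forall i k, x i k.+1 = A *m x i k + B *m u i k) ->
  (forall i k, eta i k.+1 =
      A *m eta i k + B *m u i k
      + A *m (\sum_(j < N) dmat a i j *: (x i k - x j k))
      - A *m (\sum_(j < N) dmat a i j *: (eta i k - eta j k))) ->
  forall i j, (fun k => x i k - x j k) @ \oo --> (0 : 'cV[R]_n).
Proof.
move=> Adisc _ Mstab N _ a wa [r [p [tree_edge tree_reach]]] x eta u u_def x_step eta_step i j.
have sD := dmat_stochastic wa.
have [th [c [th0 th1 consensus]]] := stochastic_consensus sD (dmat_diag_pos wa)
  (fun i ir => dmat_edge_pos wa (tree_edge i ir)) tree_reach.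
have e_step := estimation_error_step x_step eta_step sD.2.
have [W [th' [th'0 th'1 e_decay]]] := error_disagreement_decay e_step Adisc th0 th1 consensus.
apply: (stable_forced_cvg (disagreement_step u_def x_step i j) (W := l1norm (B *m K) * W)
  Mstab th'0 th'1) => k.
by apply: le_trans (l1normM _ _) _; rewrite -mulrA ler_wpM2l ?l1norm_ge0.
Qed.
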